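(* For each $j'\in\mathcal C_S$ the ball $B(j')$ is a nonempty subset of $\mathcal N_{j'}$ and $\sum_{i\in B(j')}y^*_i\ge1-\frac1\ell$. Define $(\hat x,\hat y)$ as follows. For $j'\in\mathcal C_D$, $i\in\mathcal N_{j'}$, $j\in\mathcal C$: $\hat y_i=y^*_i$, $\hat x_{ij}=x^*_{ij}$. For $j'\in\mathcal C_S$, let $i(j')$ be a facility of minimum opening cost in $B(j')$; set $\hat y_{i(j')}=1$, $\hat x_{i(j')j}=\phi(j,j')$ for all $j\in\mathcal C$, and $\hat y_i=0$, $\hat x_{ij}=0$ for all $i\in\mathcal N_{j'}\setminus\{i(j')\}$, $j\in\mathcal C$. Then for every $j'\in\mathcal C_S$, exactly one facility of $\mathcal N_{j'}$ is opened (integrally) and $(1-\frac1\ell)\mathcal L\le\sum_{j\in\mathcal C}\hat x_{i(j')j}=d_{j'}\le\mathcal U$; moreover $$\sum_{i\in\mathcal F}\Big(f_i\hat y_i+\sum_{j\in\mathcal C}\hat x_{ij}c(i,j)\Big)\le\sum_{j'\in\mathcal C_S}\Big[\tfrac{\ell}{\ell-1}\sum_{i\in\mathcal N_{j'}}f_iy^*_i+4\sum_{i\in\mathcal N_{j'}}\sum_{j\in\mathcal C}x^*_{ij}\big(c(i,j)+\ell\hat C_j\big)\Big]+\sum_{j'\in\mathcal C_D}\sum_{i\in\mathcal N_{j'}}\Big[f_iy^*_i+\sum_{j\in\mathcal C}x^*_{ij}c(i,j)\Big].$$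
   Context: Fix an LBUBFL instance with uniform bounds: finite client set $\mathcal C$, finite facility set $\mathcal F$, metric $c$ on $\mathcal C\cup\mathcal F$, opening costs $f_i\ge0$, integers $1\le\mathcal L\le\mathcal U$. Its LP relaxation is: minimize $\sum_{i\in\mathcal F}\sum_{j\in\mathcal C}c(i,j)x_{ij}+\sum_{i\in\mathcal F}f_iy_i$ subject to $\sum_{i\in\mathcal F}x_{ij}\ge1$ for all $j\in\mathcal C$; $\mathcal U y_i\ge\sum_{j\in\mathcal C}x_{ij}\ge\mathcal L y_i$ for all $i\in\mathcal F$; $x_{ij}\le y_i$ for all $i,j$; $0\le x_{ij},y_i\le1$. Let $(x^*,y^* )$ be an optimal LP solution. For $j\in\mathcal C$ let $\hat C_j=\sum_{i\in\mathcal F}x^*_{ij}c(i,j)$. Fix a real $\ell\ge2$. For $j\in\mathcal C$ let $B(j)=\{i\in\mathcal F: c(i,j)\le\ell\hat C_j\}$. Sparsification: start with $\bar{\mathcal C}=\mathcal C$ and $\mathcal C'=\emptyset$; while $\bar{\mathcal C}\ne\emptyset$, pick $j'\in\bar{\mathcal C}$ with minimum $\hat C_{j'}$ (ties arbitrary), move $j'$ from $\bar{\mathcal C}$ to $\mathcal C'$, and remove from $\bar{\mathcal C}$ every $j$ with $c(j',j)\le2\ell\hat C_j$. The elements of $\mathcal C'$ are called cluster centers. Each facility $i\in\mathcal F$ is placed in the cluster $\mathcal N_{j'}$ of exactly one center $j'\in\mathcal C'$ minimizing $c(i,j')$. For $j\in\mathcal C$, $j'\in\mathcal C'$ let $\phi(j,j')=\sum_{i\in\mathcal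 N_{j'}}x^*_{ij}$ and $d_{j'}=\sum_{j\in\mathcal C}\phi(j,j')$. A center $j'$ (and its cluster) is sparse if $d_{j'}\le\mathcal U$ and dense otherwise; $\mathcal C_S$ and $\mathcal C_D$ denote the sets of sparse and dense centers. *)

From HB Require Import structures.
From mathcomp Require Import all_boot all_order all_algebra.
Set Implicit Arguments. Unset Strict Implicit. Unset Printing Implicit Defensive.
Import Order.TTheory GRing.Theory Num.Theory.
Local Open Scope ring_scope.

Section LBUBFL.
Variables (R : realFieldType) (Cl Fa : finType).

Definition is_metric (c : Cl + Fa -> Cl + Fa -> R) : Prop :=
  (forall p q, 0 <= c p q) /\
  (forall p q, c p q = 0 <-> p = q) /\
  (forall p q, c p q = c q p) /\
  (forall p q r, c p r <= c p q + c q r).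

Definition dist (c : Cl + Fa -> Cl + Fa -> R) (i : Fa) (j : Cl) : R :=
  c (inr i) (inl j).
Definition dCC (c : Cl + Fa -> Cl + Fa -> R) (j k : Cl) : R :=
  c (inl j) (inl k).

Definition lp_feasible (L U : nat) (x : Fa -> Cl -> R) (y : Fa -> R) : Prop :=
  (forall j, 1 <= \sum_(i : Fa) x i j) /\
  (forall i, \sum_(j : Cl) x i j <= U%:R * y i) /\
  (forall i, L%:R * y i <= \sum_(j : Cl) x i j) /\
  (forall i j, x i j <= y i) /\
  (forall i j, 0 <= x i j <= 1) /\
  (forall i, 0 <= y i <= 1).

Definition lp_cost (c : Cl + Fa -> Cl + Fa -> R) (f : Fa -> R)
  (x : Fa -> Cl -> R) (y : Fa -> R) : R :=
  \sum_(i : Fa) \sum_(j : Cl) dist c i j * x i j + \sum_(i : Fa) f i * y i.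

Definition lp_optimal c f L U x y : Prop :=
  lp_feasible L U x y /\
  forall x' y', lp_feasible L U x' y' -> lp_cost c f x y <= lp_cost c f x' y'.

Definition Chat c (x : Fa -> Cl -> R) (j : Cl) : R :=
  \sum_(i : Fa) x i j * dist c i j.

Definition ball c x (ell : R) (j : Cl) : {set Fa} :=
  [set i | dist c i j <= ell * Chat c x j].

(* A run of the sparsification loop starting from Cbar, picking the centers
   in the order given by s (ties broken arbitrarily). *)
Fixpoint sparsify_run c x (ell : R) (Cbar : {set Cl}) (s : seq Cl) : Prop :=
  match s with
  | [::] => Cbar = set0
  | j' :: s' =>
      [/\ j' \in Cbar,
          (forall j, j \in Cbar -> Chat c x j' <= Chat c x j) &
          sparsify_run c x ell
            ((Cbar :\ j') :\: [set j | dCC c j' j <= 2 * ell * Chat c x j]) s']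
  end.

(* sigma i is the (unique) center whose cluster contains facility i;
   it is a nearest center (ties arbitrary). *)
Definition cluster_assignment c (Cp : {set Cl}) (sigma : Fa -> Cl) : Prop :=
  forall i, sigma i \in Cp /\
    (forall k, k \in Cp -> dist c i (sigma i) <= dist c i k).

Definition cluster (sigma : Fa -> Cl) (j' : Cl) : {set Fa} :=
  [set i | sigma i == j'].

Definition phi (x : Fa -> Cl -> R) sigma (j j' : Cl) : R :=
  \sum_(i in cluster sigma j') x i j.

Definition dem x sigma (j' : Cl) : R := \sum_(j : Cl) phi x sigma j j'.

Definition sparse_centers (U : nat) x sigma (Cp : {set Cl}) : {set Cl} :=
  [set j' in Cp | dem x sigma j' <= U%:R].
Definition dense_centers (U : nat) x sigma (Cp : {set Cl}) : {set Cl} :=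
  [set j' in Cp | U%:R < dem x sigma j'].

(* (\hat x, \hat y); ic j' is the chosen facility i(j') for sparse j'. *)
Definition yhat (CS : {set Cl}) sigma (ic : Cl -> Fa) (y : Fa -> R) (i : Fa) : R :=
  if sigma i \in CS then (if i == ic (sigma i) then 1 else 0) else y i.
Definition xhat (CS : {set Cl}) sigma (ic : Cl -> Fa) (x : Fa -> Cl -> R)
  (i : Fa) (j : Cl) : R :=
  if sigma i \in CS then (if i == ic (sigma i) then phi x sigma j (sigma i) else 0)
  else x i j.

End LBUBFL.

From HB Require Import structures.
From mathcomp Require Import all_boot all_order all_algebra.
From mathcomp Require Import ring lra.
Import Order.TTheory GRing.Theory Num.Theory.
Set Implicit Arguments. Unset Strict Implicit.
Local Open Scope ring_scope.

(* The argument is organised in four layers.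
   1. Sparsification: the centers produced by a run of the loop are pairwise
      far apart (2 l C_a < c(a,b)) and every client j has a center k with
      c(k,j) <= 2 l C_j and C_k <= C_j.
   2. Cluster geometry: from these two facts alone, for a nearest-center
      assignment of facilities, the ball B(j') of a center lies inside its
      cluster N_{j'}, and moving demand from any i in N_{j'} to any facility
      of B(j') stretches c(i,j) to at most 4 (c(i,j) + l C_j).
   3. Markov's inequality: at least a (1 - 1/l) fraction of the LP mass of a
      client lies in its ball; hence so does the y-mass of the ball.
   4. Cluster accounting: the rounded cost splits over clusters; a dense
      cluster keeps its LP cost, a sparse one pays f(i(j')) <= l/(l-1) times
      its fractional opening cost plus the stretched connection cost.
   The theorem combines these facts. *)

Section Sparsification.
Variables (R : realFieldType) (Cl Fa : finType).
Variables (c : Cl + Fa -> Cl + Fa -> R) (x : Fa -> Cl -> R) (ell : R).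

Lemma sparsify_run_sub Cbar s :
  sparsify_run c x ell Cbar s -> {subset s <= Cbar}.
Proof.
elim: s Cbar => [|j' s IH] Cbar //= [j'_in _ run] k.
rewrite inE => /orP[/eqP -> //| ks].
by have := IH _ run k ks; rewrite !inE => /andP[_ /andP[_ ->]].
Qed.

(* Distinct centers are far apart: a later center survived the removal step
   of every earlier one, and earlier centers have smaller C. *)
Lemma sparsify_run_far Cbar s :
  (forall p q, c p q = c q p) -> 0 <= ell ->
  sparsify_run c x ell Cbar s ->
  {in s &, forall a b, a != b -> 2 * ell * Chat c x a < dCC c a b}.
Proof.
move=> c_sym ell_ge0; elim: s Cbar => [|j' s IH] Cbar //= [_ j'_min run].
have far_later b : b \in s ->
    2 * ell * Chat c x j' < dCC c j' b /\ 2 * ell * Chat c x b < dCC c j' b.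
  move=> bs; have := sparsify_run_sub run bs.
  rewrite !inE -ltNge => /andP[far /andP[_ b_in]]; split=> //.
  apply: le_lt_trans far; apply: ler_wpM2l (j'_min _ b_in).
  by rewrite mulr_ge0.
move=> a b; rewrite !inE => /orP[/eqP ->|a_s] /orP[/eqP ->|bs].
- by rewrite eqxx.
- by move=> _; case: (far_later _ bs).
- by move=> _; case: (far_later _ a_s); rewrite /dCC c_sym.
- exact: IH run a b a_s bs.
Qed.

(* Every client of the initial set is close to a center with smaller C:
   it is either picked itself or removed by a center picked before it. *)
Lemma sparsify_run_cover Cbar s :
  (forall p, c p p = 0) -> 0 <= ell -> (forall j, 0 <= Chat c x j) ->
  sparsify_run c x ell Cbar s ->
  forall j, j \in Cbar -> exists2 k, k \in s &
    dCC c k j <= 2 * ell * Chat c x j /\ Chat c x k <= Chat c x j.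
Proof.
move=> c_refl ell_ge0 C_ge0; elim: s Cbar => [|j' s IH] Cbar /=.
  by move=> -> j; rewrite inE.
case=> _ j'_min run j j_in.
have [j_left|j_removed] :=
  boolP (j \in (Cbar :\ j') :\: [set j | dCC c j' j <= 2 * ell * Chat c x j]).
  by have [k ks close] := IH _ run j j_left; exists k; rewrite // inE ks orbT.
exists j'; first by rewrite inE eqxx.
split; last exact: j'_min.
have [<-|j_ne] := eqVneq j j'.
  by rewrite /dCC c_refl !mulr_ge0.
by move: j_removed; rewrite !inE j_in j_ne andbT; case: (_ <= _).
Qed.

End Sparsification.

Section MetricFacts.
Variables (R : realFieldType) (Cl Fa : finType) (c : Cl + Fa -> Cl + Fa -> R).
Hypothesis c_metric : is_metric c.

Lemma dist_ge0 i j : 0 <= dist c i j.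
Proof. by have [c_ge0 _] := c_metric; apply: c_ge0. Qed.

Lemma dCC_le_dist i a b : dCC c a b <= dist c i a + dist c i b.
Proof.
have [_ [_ [c_sym c_tri]]] := c_metric.
by rewrite /dCC /dist (c_sym (inr i) (inl a)); apply: c_tri.
Qed.

Lemma dist_le_dCC i a b : dist c i b <= dist c i a + dCC c b a.
Proof.
have [_ [_ [c_sym c_tri]]] := c_metric.
by rewrite /dCC (c_sym (inl b)); apply: c_tri.
Qed.

Lemma dist_le_via i0 i a j :
  dist c i0 j <= dist c i0 a + dist c i a + dist c i j.
Proof.
have [_ [_ [c_sym c_tri]]] := c_metric.
rewrite /dist; apply: le_trans (c_tri _ (inl a) _) _.
by rewrite -addrA lerD2l (c_sym (inr i) (inl a)); apply: c_tri.
Qed.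

End MetricFacts.

Lemma sum_le_subset (R : numDomainType) (T : finType) (A B : {set T})
    (F : T -> R) :
  A \subset B -> (forall i, 0 <= F i) -> \sum_(i in A) F i <= \sum_(i in B) F i.
Proof.
move=> AB F_ge0; rewrite [X in _ <= X](big_setID A) /= (setIidPr AB) lerDl.
exact: sumr_ge0.
Qed.

Section Markov.
Variables (R : realFieldType) (I : finType) (w d : I -> R) (t : R).
Hypotheses (w_ge0 : forall i, 0 <= w i) (d_ge0 : forall i, 0 <= d i).

Lemma markov_mass :
  t * \sum_(i | t * (\sum_k w k * d k) < d i) w i <= 1.
Proof.
set M := \sum_k w k * d k; set tail := \sum_(i | _) _.
have wd_ge0 k : 0 <= w k * d k by rewrite mulr_ge0.
have [M0|M_neq0] := eqVneq M 0.
  suff -> : tail = 0 by rewrite mulr0.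
  apply: big1 => i; rewrite M0 mulr0 => d_pos.
  have /eqP := psumr_eq0P (fun k _ => wd_ge0 k) M0 (i := i) isT.
  by rewrite mulf_eq0 (gt_eqF d_pos) orbF => /eqP.
have M_gt0 : 0 < M by rewrite lt_def M_neq0 sumr_ge0.
suff tail_le : t * M * tail <= M.
  by rewrite -(ler_pM2r M_gt0) mul1r -mulrA (mulrC tail) mulrA.
apply: le_trans (_ : \sum_(i | t * M < d i) w i * d i <= M).
  rewrite /tail mulr_sumr; apply: ler_sum => i /ltW tail_i.
  by rewrite mulrC ler_wpM2l.
rewrite /M [X in _ <= X](bigID (fun i => t * M < d i)) /= lerDl.
exact: sumr_ge0.
Qed.

End Markov.

Section ClusterGeometry.
Variables (R : realFieldType) (Cl Fa : finType).
Variables (c : Cl + Fa -> Cl + Fa -> R) (x : Fa -> Cl -> R) (ell : R).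
Variables (Cp : {set Cl}) (sigma : Fa -> Cl).
Hypothesis c_metric : is_metric c.
Hypothesis assign : cluster_assignment c Cp sigma.
Hypothesis centers_far :
  {in Cp &, forall a b, a != b -> 2 * ell * Chat c x a < dCC c a b}.

(* A facility i within l C_{j'} of a center j' belongs to the cluster of j':
   its nearest center k satisfies c(j',k) <= 2 c(i,j') <= 2 l C_{j'}, so the
   separation of the centers forces k = j'. *)
Lemma ball_sub_cluster j' : j' \in Cp -> ball c x ell j' \subset cluster sigma j'.
Proof.
move=> j'_in; apply/subsetP => i; rewrite !inE => near_j'.
have [k_in nearest] := assign i.
apply/negPn/negP; rewrite eq_sym => k_ne.
have := centers_far j'_in k_in k_ne.
have := dCC_le_dist c_metric i j' (sigma i); have := nearest _ j'_in.
lra.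
Qed.

Hypothesis centers_cover : forall j, exists2 k, k \in Cp &
  dCC c k j <= 2 * ell * Chat c x j /\ Chat c x k <= Chat c x j.
Hypotheses (ell_ge0 : 0 <= ell) (Chat_ge0 : forall j, 0 <= Chat c x j).

(* A facility is not much farther from its center than from any client j:
   some center lies within 2 l C_j of j. *)
Lemma dist_to_center i j :
  dist c i (sigma i) <= dist c i j + 2 * ell * Chat c x j.
Proof.
have [k k_in [k_close _]] := centers_cover j.
have [_ nearest] := assign i.
have := nearest _ k_in; have := dist_le_dCC c_metric i j k.
lra.
Qed.

(* The radius l C_{j'} of the ball of the center j' of i is controlled by
   any client j: either j' is the center k covering j (and C_{j'} <= C_j), or
   j' and k are separated, while both are close to i. *)
Lemma center_radius_le i j :
  ell * Chat c x (sigma i) <= dist c i j + 2 * ell * Chat c x j.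
Proof.
have [k k_in [k_close k_small]] := centers_cover j.
have [j'_in nearest] := assign i.
have d_ge0 := dist_ge0 c_metric i j.
have eC_ge0 : 0 <= ell * Chat c x j by rewrite mulr_ge0.
have [k_eq|k_ne] := eqVneq (sigma i) k.
  by have := ler_wpM2l ell_ge0 k_small; rewrite -k_eq; lra.
have := centers_far j'_in k_in k_ne.
have := dCC_le_dist c_metric i (sigma i) k; have := nearest _ k_in.
have := dist_le_dCC c_metric i j k.
lra.
Qed.

Lemma reassign_dist i i0 j : i0 \in ball c x ell (sigma i) ->
  dist c i0 j <= 4 * (dist c i j + ell * Chat c x j).
Proof.
rewrite inE => i0_near.
have := dist_le_via c_metric i0 i (sigma i) j.
have := dist_to_center i j; have := center_radius_le i j.
have := dist_ge0 c_metric i j.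
lra.
Qed.

End ClusterGeometry.

Section LPFacts.
Variables (R : realFieldType) (Cl Fa : finType) (c : Cl + Fa -> Cl + Fa -> R).
Variables (L U : nat) (x : Fa -> Cl -> R) (y : Fa -> R).
Hypothesis feasible : lp_feasible L U x y.

Lemma lp_x_ge0 i j : 0 <= x i j.
Proof. by have [_ [_ [_ [_ [/(_ i j) /andP[]]]]]] := feasible. Qed.

Lemma lp_y_ge0 i : 0 <= y i.
Proof. by have [_ [_ [_ [_ [_ /(_ i) /andP[]]]]]] := feasible. Qed.

Lemma lp_Chat_ge0 : is_metric c -> forall j, 0 <= Chat c x j.
Proof.
move=> c_metric j; apply: sumr_ge0 => i _.
by rewrite mulr_ge0 ?lp_x_ge0 ?dist_ge0.
Qed.

End LPFacts.

Section ClusterSums.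
Variables (R : realFieldType) (Cl Fa : finType) (U : nat).
Variables (x : Fa -> Cl -> R) (Cp : {set Cl}) (sigma : Fa -> Cl).

Lemma sum_by_cluster (F : Fa -> R) : (forall i, sigma i \in Cp) ->
  \sum_i F i = \sum_(j' in Cp) \sum_(i in cluster sigma j') F i.
Proof.
move=> sigma_in; rewrite (partition_big sigma (mem Cp)) //=.
by apply: eq_bigr => j' _; apply: eq_bigl => i; rewrite inE.
Qed.

Lemma sum_sparse_dense (G : Cl -> R) :
  \sum_(j' in Cp) G j' = \sum_(j' in sparse_centers U x sigma Cp) G j'
                        + \sum_(j' in dense_centers U x sigma Cp) G j'.
Proof.
rewrite (bigID (fun j' => dem x sigma j' <= U%:R)) /=.
by congr (_ + _); apply: eq_bigl => j'; rewrite inE // ltNge.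
Qed.

End ClusterSums.

Section Rounding.
Variables (R : realFieldType) (Cl Fa : finType).
Variables (c : Cl + Fa -> Cl + Fa -> R) (f : Fa -> R) (L U : nat).
Variables (x : Fa -> Cl -> R) (y : Fa -> R) (ell : R).
Variables (Cp : {set Cl}) (sigma : Fa -> Cl).
Hypotheses (c_metric : is_metric c) (f_ge0 : forall i, 0 <= f i).
Hypothesis feasible : lp_feasible L U x y.
Hypothesis ell_gt1 : 1 < ell.
Hypothesis assign : cluster_assignment c Cp sigma.
Hypothesis centers_far :
  {in Cp &, forall a b, a != b -> 2 * ell * Chat c x a < dCC c a b}.
Hypothesis centers_cover : forall j, exists2 k, k \in Cp &
  dCC c k j <= 2 * ell * Chat c x j /\ Chat c x k <= Chat c x j.

Local Notation CS := (sparse_centers U x sigma Cp).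
Local Notation ball := (ball c x ell).

Let ell_gt0 : 0 < ell. Proof. exact: lt_trans ltr01 ell_gt1. Qed.
Let x_ge0 := lp_x_ge0 feasible.
Let y_ge0 := lp_y_ge0 feasible.
Let Chat_ge0 := lp_Chat_ge0 feasible c_metric.
Let mass_gt0 : 0 < 1 - ell^-1. Proof. by rewrite subr_gt0 invf_lt1. Qed.

(* Markov's inequality applied to the fractional assignment of client j. *)
Lemma ball_x_mass j : 1 - ell^-1 <= \sum_(i in ball j) x i j.
Proof.
have [covered _] := feasible.
have tail_le : ell * \sum_(i | ell * Chat c x j < dist c i j) x i j <= 1 :=
  markov_mass ell (x_ge0 ^~ j) (dist_ge0 c_metric ^~ j).
have split_mass : \sum_i x i j = \sum_(i in ball j) x i j
    + \sum_(i | ell * Chat c x j < dist c i j) x i j.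
  rewrite (bigID (mem (ball j))) /=.
  by congr (_ + _); apply: eq_bigl => i; rewrite inE // ltNge.
have tail_le_inv : \sum_(i | ell * Chat c x j < dist c i j) x i j <= ell^-1.
  by rewrite -(ler_pM2l ell_gt0) mulfV ?gt_eqF.
have := covered j; lra.
Qed.

(* Since x <= y, the ball of j carries y-mass at least 1 - 1/l. *)
Lemma ball_y_mass j : 1 - ell^-1 <= \sum_(i in ball j) y i.
Proof.
have [_ [_ [_ [x_le_y _]]]] := feasible.
by apply: le_trans (ball_x_mass j) _; apply: ler_sum => i _; apply: x_le_y.
Qed.

Lemma center_ball j' : j' \in Cp ->
  [/\ ball j' != set0, ball j' \subset cluster sigma j' &
      1 - ell^-1 <= \sum_(i in ball j') y i].
Proof.
move=> j'_in; split; last exact: ball_y_mass.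
- apply/negP => /eqP ball0; have := ball_y_mass j'.
  by rewrite ball0 big_set0 leNgt mass_gt0.
- exact: (ball_sub_cluster c_metric assign centers_far j'_in).
Qed.

(* The demand of a cluster is at least L times the y-mass of the ball of its
   center, hence at least (1 - 1/l) L. *)
Lemma dem_lower j' : j' \in Cp -> (1 - ell^-1) * L%:R <= dem x sigma j'.
Proof.
move=> j'_in; have [_ [_ [L_le _]]] := feasible.
have [_ ball_sub _] := center_ball j'_in.
rewrite /dem /phi exchange_big /=.
apply: le_trans (_ : \sum_(i in ball j') L%:R * y i <= _).
  by rewrite -mulr_sumr mulrC ler_wpM2l ?ball_y_mass.
apply: le_trans (sum_le_subset ball_sub _) _ => [i|]; first by rewrite mulr_ge0.
by apply: ler_sum => i _; apply: L_le.
Qed.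

Lemma sparse_center j' : j' \in CS -> j' \in Cp /\ dem x sigma j' <= U%:R.
Proof. by rewrite inE => /andP. Qed.

Variable ic : Cl -> Fa.
Hypothesis ic_cheapest : forall j', j' \in CS ->
  ic j' \in ball j' /\ (forall i, i \in ball j' -> f (ic j') <= f i).

Local Notation xh := (xhat CS sigma ic x).
Local Notation yh := (yhat CS sigma ic y).

Lemma sigma_ic j' : j' \in CS -> sigma (ic j') = j'.
Proof.
move=> j'_sparse; have [j'_in _] := sparse_center j'_sparse.
have [_ /subsetP ball_sub _] := center_ball j'_in.
by have := ball_sub _ (ic_cheapest j'_sparse).1; rewrite inE => /eqP.
Qed.

Lemma rounded_sparse_cluster j' : j' \in CS ->
  [/\ forall i, i \in cluster sigma j' -> yh i = 0 \/ yh i = 1,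
      #|[set i in cluster sigma j' | yh i == 1]| = 1%N,
      (1 - ell^-1) * L%:R <= \sum_(j : Cl) xh (ic j') j,
      \sum_(j : Cl) xh (ic j') j = dem x sigma j' &
      dem x sigma j' <= U%:R].
Proof.
move=> j'_sparse; have [j'_in dem_le] := sparse_center j'_sparse.
have ic_j' := sigma_ic j'_sparse.
have served : \sum_(j : Cl) xh (ic j') j = dem x sigma j'.
  by apply: eq_bigr => j _; rewrite /xhat ic_j' j'_sparse eqxx.
split=> //; last by rewrite served dem_lower.
- move=> i; rewrite inE => /eqP sigma_i; rewrite /yhat sigma_i j'_sparse.
  by case: (_ == _); [right|left].
- suff -> : [set i in cluster sigma j' | yh i == 1] = [set ic j'].
    by rewrite cards1.
  apply/setP => i; rewrite !inE /yhat.
  have [sigma_i|sigma_ne] := eqVneq (sigma i) j'.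
    rewrite sigma_i j'_sparse /=.
    by case: (i == ic j'); rewrite ?eqxx // eq_sym oner_eq0.
  by apply/esym/eqP => i_eq; rewrite i_eq ic_j' eqxx in sigma_ne.
Qed.

(* Opening i(j') costs at most l/(l-1) times the fractional opening cost of
   its cluster: i(j') is cheapest in a ball of y-mass at least 1 - 1/l. *)
Lemma facility_cost_le j' : j' \in CS ->
  f (ic j') <= ell / (ell - 1) * \sum_(i in cluster sigma j') f i * y i.
Proof.
move=> j'_sparse; have [j'_in _] := sparse_center j'_sparse.
have [_ ball_sub _] := center_ball j'_in.
have [_ ic_min] := ic_cheapest j'_sparse.
have scaled : (1 - ell^-1) * f (ic j') <= \sum_(i in cluster sigma j') f i * y i.
  apply: le_trans (ler_wpM2r (f_ge0 _) (ball_y_mass j')) _.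
  rewrite mulr_suml; apply: le_trans (_ : \sum_(i in ball j') f i * y i <= _).
    by apply: ler_sum => i i_in; rewrite mulrC ler_wpM2r ?ic_min.
  by apply: sum_le_subset ball_sub _ => i; rewrite mulr_ge0.
have -> : f (ic j') = ell / (ell - 1) * ((1 - ell^-1) * f (ic j')).
  by field; rewrite subr_eq0 !gt_eqF.
by rewrite ler_wpM2l // divr_ge0 ?subr_ge0 // ltW.
Qed.

Lemma connection_cost_le j' : j' \in CS ->
  \sum_(j : Cl) phi x sigma j j' * dist c (ic j') j
  <= 4 * \sum_(i in cluster sigma j') \sum_(j : Cl)
           x i j * (dist c i j + ell * Chat c x j).
Proof.
move=> j'_sparse; have [ic_near _] := ic_cheapest j'_sparse.
rewrite /phi; under eq_bigr => j _ do rewrite mulr_suml.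
rewrite exchange_big mulr_sumr; apply: ler_sum => i; rewrite inE => /eqP sigma_i.
rewrite mulr_sumr; apply: ler_sum => j _; rewrite mulrCA ler_wpM2l //.
have stretch := reassign_dist c_metric assign centers_far centers_cover
  (ltW ell_gt0) Chat_ge0.
by apply: stretch; rewrite sigma_i.
Qed.

Lemma sparse_cluster_cost j' : j' \in CS ->
  \sum_(i in cluster sigma j') (f i * yh i + \sum_(j : Cl) xh i j * dist c i j)
  = f (ic j') + \sum_(j : Cl) phi x sigma j j' * dist c (ic j') j.
Proof.
move=> j'_sparse; have ic_j' := sigma_ic j'_sparse.
have closed : \sum_(i in cluster sigma j' | i != ic j')
    (f i * yh i + \sum_(j : Cl) xh i j * dist c i j) = 0.
  apply: big1 => i /andP[]; rewrite inE => /eqP sigma_i i_ne.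
  rewrite /yhat /xhat sigma_i j'_sparse (negbTE i_ne) mulr0 add0r.
  by apply: big1 => j _; rewrite mul0r.
rewrite (bigD1 (ic j')); last by rewrite inE ic_j'.
by rewrite /= closed addr0 /yhat /xhat ic_j' j'_sparse eqxx mulr1.
Qed.

Lemma dense_cluster_cost j' : j' \notin CS ->
  \sum_(i in cluster sigma j') (f i * yh i + \sum_(j : Cl) xh i j * dist c i j)
  = \sum_(i in cluster sigma j') (f i * y i + \sum_(j : Cl) x i j * dist c i j).
Proof.
move=> j'_dense; apply: eq_bigr => i; rewrite inE => /eqP sigma_i.
by rewrite /yhat /xhat sigma_i (negbTE j'_dense).
Qed.

Lemma rounded_cost_le :
  \sum_(i : Fa) (f i * yh i + \sum_(j : Cl) xh i j * dist c i j)
  <= \sum_(j' in CS)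
       (ell / (ell - 1) * \sum_(i in cluster sigma j') f i * y i
        + 4 * \sum_(i in cluster sigma j') \sum_(j : Cl)
                x i j * (dist c i j + ell * Chat c x j))
     + \sum_(j' in dense_centers U x sigma Cp) \sum_(i in cluster sigma j')
         (f i * y i + \sum_(j : Cl) x i j * dist c i j).
Proof.
rewrite (sum_by_cluster _ (fun i => (assign i).1)) (sum_sparse_dense U x _ sigma).
apply: lerD; apply: ler_sum => j' j'_in.
  rewrite sparse_cluster_cost //.
  exact: lerD (facility_cost_le j'_in) (connection_cost_le j'_in).
rewrite dense_cluster_cost //; move: j'_in; rewrite !inE ltNge.
by case: (_ <= _); rewrite ?andbF.
Qed.

End Rounding.

Theorem lemma2p4 (R : realFieldType) (Cl Fa : finType)
  (c : Cl + Fa -> Cl + Fa -> R) (f : Fa -> R) (L U : nat)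
  (x : Fa -> Cl -> R) (y : Fa -> R) (ell : R) (s : seq Cl) (sigma : Fa -> Cl) :
  is_metric c ->
  (forall i, 0 <= f i) ->
  (1 <= L)%N -> (L <= U)%N ->
  lp_optimal c f L U x y ->
  2 <= ell ->
  sparsify_run c x ell [set: Cl] s ->
  cluster_assignment c [set j in s] sigma ->
  let CS := sparse_centers U x sigma [set j in s] in
  let CD := dense_centers U x sigma [set j in s] in
  (forall j', j' \in CS ->
     [/\ ball c x ell j' != set0,
         ball c x ell j' \subset cluster sigma j' &
         1 - ell^-1 <= \sum_(i in ball c x ell j') y i]) /\
  (forall ic : Cl -> Fa,
     (forall j', j' \in CS ->
        ic j' \in ball c x ell j' /\
        (forall i, i \in ball c x ell j' -> f (ic j') <= f i)) ->
     let xh := xhat CS sigma ic x in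
     let yh := yhat CS sigma ic y in
     (forall j', j' \in CS ->
        [/\ forall i, i \in cluster sigma j' -> yh i = 0 \/ yh i = 1,
            #|[set i in cluster sigma j' | yh i == 1]| = 1%N,
            (1 - ell^-1) * L%:R <= \sum_(j : Cl) xh (ic j') j,
            \sum_(j : Cl) xh (ic j') j = dem x sigma j' &
            dem x sigma j' <= U%:R]) /\
     \sum_(i : Fa) (f i * yh i + \sum_(j : Cl) xh i j * dist c i j)
     <= \sum_(j' in CS)
          (ell / (ell - 1) * \sum_(i in cluster sigma j') f i * y i
           + 4 * \sum_(i in cluster sigma j') \sum_(j : Cl)
                   x i j * (dist c i j + ell * Chat c x j))
        + \sum_(j' in CD) \sum_(i in cluster sigma j')
            (f i * y i + \sum_(j : Cl) x i j * dist c i j)).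
Proof.
move=> c_metric f_ge0 _ _ [feasible _] ell_ge2 run assign CS CD.
have [_ [c_zero [c_sym _]]] := c_metric.
have ell_gt1 : 1 < ell by apply: lt_le_trans ell_ge2; rewrite ltr1n.
have ell_ge0 : 0 <= ell by rewrite ltW // (lt_trans ltr01).
have far : {in [set j in s] &, forall a b,
    a != b -> 2 * ell * Chat c x a < dCC c a b}.
  move=> a b; rewrite !inE => a_s b_s.
  exact: (sparsify_run_far c_sym ell_ge0 run a_s b_s).
have cover j : exists2 k, k \in [set j in s] &
    dCC c k j <= 2 * ell * Chat c x j /\ Chat c x k <= Chat c x j.
  have c_refl p : c p p = 0 by apply/c_zero.
  have [k k_in k_close] := sparsify_run_cover c_refl ell_ge0
    (lp_Chat_ge0 feasible c_metric) run (in_setT j).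
  by exists k; rewrite ?inE.
split=> [j' /sparse_center [j'_in _] | ic ic_cheapest xh yh].
  exact: (center_ball c_metric feasible ell_gt1 assign far j'_in).
split=> [j' j'_sparse|].
  exact: (rounded_sparse_cluster c_metric feasible ell_gt1 assign far
            ic_cheapest j'_sparse).
have := rounded_cost_le c_metric f_ge0 feasible ell_gt1 assign far cover
  ic_cheapest.
by rewrite -/CS -/CD -/xh -/yh.
Qed.
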